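(* Let $L$ be a commutative C-loop with neutral element $e$, and let $K=\{x\in L: x^2=e\}$. Then $K$ is a normal subloop of $L$ and the factor loop $L/K$ is a group.
   Context: A C-loop is a loop satisfying $x(y(yz))=((xy)y)z$ for all $x,y,z$. A subloop $K$ of $L$ is normal if $xK=Kx$, $x(yK)=(xy)K$ and $x(Ky)=(xK)y$ for all $x,y\in L$; $L/K$ is the factor loop of cosets. *)

Set Implicit Arguments.

Definition is_loop (T : Type) (mul : T -> T -> T) (e : T) : Prop :=
  (forall x, mul e x = x /\ mul x e = x) /\
  (forall a b, exists! x, mul a x = b) /\
  (forall a b, exists! y, mul y a = b).

Definition commutative_op (T : Type) (mul : T -> T -> T) : Prop :=
  forall x y, mul x y = mul y x.

Definition C_identity (T : Type) (mul : T -> T -> T) : Prop :=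
  forall x y z, mul x (mul y (mul y z)) = mul (mul (mul x y) y) z.

Definition set_eq (T : Type) (A B : T -> Prop) : Prop := forall z, A z <-> B z.

(* K is a subloop: contains e, closed under multiplication and under left and right
   division (so K with the restricted operation is itself a loop). *)
Definition is_subloop (T : Type) (mul : T -> T -> T) (e : T) (K : T -> Prop) : Prop :=
  K e /\
  (forall a b, K a -> K b -> K (mul a b)) /\
  (forall a b x, K a -> K b -> mul a x = b -> K x) /\
  (forall a b y, K a -> K b -> mul y a = b -> K y).

Definition lcoset (T : Type) (mul : T -> T -> T) (x : T) (K : T -> Prop) : T -> Prop :=
  fun z => exists k, K k /\ z = mul x k.
Definition rcoset (T : Type) (mul : T -> T -> T) (K : T -> Prop) (x : T) : T -> Prop :=
  fun z => exists k, K k /\ z = mul k x.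
Definition lcoset2 (T : Type) (mul : T -> T -> T) (x y : T) (K : T -> Prop) : T -> Prop :=
  fun z => exists k, K k /\ z = mul x (mul y k).
Definition mcoset_l (T : Type) (mul : T -> T -> T) (x : T) (K : T -> Prop) (y : T) : T -> Prop :=
  fun z => exists k, K k /\ z = mul x (mul k y).
Definition mcoset_r (T : Type) (mul : T -> T -> T) (x : T) (K : T -> Prop) (y : T) : T -> Prop :=
  fun z => exists k, K k /\ z = mul (mul x k) y.

Definition is_normal_subloop (T : Type) (mul : T -> T -> T) (e : T) (K : T -> Prop) : Prop :=
  is_subloop mul e K /\
  (forall x, set_eq (lcoset mul x K) (rcoset mul K x)) /\
  (forall x y, set_eq (lcoset2 mul x y K) (lcoset mul (mul x y) K)) /\
  (forall x y, set_eq (mcoset_l mul x K y) (mcoset_r mul x K y)).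

(* The factor loop L/K: elements are the cosets xK, with (xK)(yK) = (xy)K.
   "L/K is a group": the operation is well defined on cosets, associative,
   has identity eK = K, and every coset has an inverse. *)
Definition factor_is_group (T : Type) (mul : T -> T -> T) (e : T) (K : T -> Prop) : Prop :=
  let C := fun x => lcoset mul x K in
  (forall x x' y y', set_eq (C x) (C x') -> set_eq (C y) (C y') ->
       set_eq (C (mul x y)) (C (mul x' y'))) /\
  (forall x y z, set_eq (C (mul (mul x y) z)) (C (mul x (mul y z)))) /\
  (forall x, set_eq (C (mul e x)) (C x) /\ set_eq (C (mul x e)) (C x)) /\
  (forall x, exists y, set_eq (C (mul x y)) (C e) /\ set_eq (C (mul y x)) (C e)).

From Stdlib Require Import Setoid.

(* In a commutative C-loop squares are nuclear and squaring is multiplicative,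
   (xy)(xy) = (xx)(yy).  Hence the coset xK consists exactly of the z with
   zz = xx, so every coset is labelled by a square, multiplication of cosets
   is multiplication of these labels, and since squares lie in the nucleus
   L/K is a group. *)

Section CommutativeCLoop.

Variables (T : Type) (mul : T -> T -> T) (e : T).
Hypothesis mul_e_l : forall x, mul e x = x.
Hypothesis mul_e_r : forall x, mul x e = x.
Hypothesis ldiv_exists : forall a b, exists x, mul a x = b.
Hypothesis mul_comm : commutative_op mul.
Hypothesis C_id : C_identity mul.

Definition involutions : T -> Prop := fun x => mul x x = e.

Lemma exists_inverse x : exists x', mul x x' = e.
Proof. apply ldiv_exists. Qed.

Lemma left_alternative y z : mul y (mul y z) = mul (mul y y) z.
Proof. rewrite <- (mul_e_l (mul y (mul y z))), C_id, mul_e_l. reflexivity. Qed.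

Lemma right_alternative x y : mul (mul x y) y = mul x (mul y y).
Proof.
  rewrite <- (mul_e_r (mul (mul x y) y)), <- C_id, mul_e_r. reflexivity.
Qed.

Lemma square_nuclear a y b :
  mul a (mul (mul y y) b) = mul (mul a (mul y y)) b.
Proof. rewrite <- left_alternative, C_id, right_alternative. reflexivity. Qed.

Lemma left_inverse_property y y' :
  mul y y' = e -> forall w, mul y' (mul y w) = w.
Proof.
  intros Hy w. destruct (ldiv_exists y w) as [z <-].
  rewrite C_id, (mul_comm y' y), Hy, mul_e_l. reflexivity.
Qed.

Lemma left_inverse_property' y y' :
  mul y y' = e -> forall w, mul y (mul y' w) = w.
Proof. intros Hy. apply left_inverse_property. rewrite mul_comm. exact Hy. Qed.

Lemma right_inverse_property y y' :
  mul y y' = e -> forall w, mul (mul w y) y' = w.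
Proof.
  intros Hy w. rewrite (mul_comm (mul w y)), (mul_comm w).
  apply left_inverse_property. exact Hy.
Qed.

Lemma square_inverse y y' : mul y y' = e -> mul (mul y' y') (mul y y) = e.
Proof.
  intros Hy. rewrite <- left_alternative, (left_inverse_property y y' Hy).
  rewrite mul_comm. exact Hy.
Qed.

Lemma square_mul x y : mul (mul x y) (mul x y) = mul (mul x x) (mul y y).
Proof.
  destruct (exists_inverse x) as [x' Hx].
  assert (Hx' : mul x' x = e) by (rewrite mul_comm; exact Hx).
  assert (Hxy : mul (mul x y) x' = y).
  { rewrite (mul_comm x y). apply right_inverse_property. exact Hx. }
  assert (Hsq : mul (mul (mul x y) (mul x y)) x' = mul x (mul y y)).
  { rewrite <- left_alternative, Hxy. apply right_alternative. }
  rewrite <- (right_inverse_property x' x Hx' (mul (mul x y) (mul x y))), Hsq.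
  rewrite mul_comm, left_alternative. reflexivity.
Qed.

Lemma square_mul_involution u k :
  involutions k -> mul (mul u k) (mul u k) = mul u u.
Proof. intros Hk. rewrite square_mul, Hk, mul_e_r. reflexivity. Qed.

Lemma lcoset_involutions_iff u z :
  lcoset mul u involutions z <-> mul z z = mul u u.
Proof.
  split.
  - intros [k [Hk ->]]. apply square_mul_involution. exact Hk.
  - intros Hz. destruct (exists_inverse u) as [u' Hu].
    exists (mul u' z). split.
    + unfold involutions. rewrite square_mul, Hz. apply square_inverse. exact Hu.
    + rewrite left_inverse_property'; [reflexivity | exact Hu].
Qed.

Lemma lcoset_involutions_eq_iff a b :
  set_eq (lcoset mul a involutions) (lcoset mul b involutions) <-> mul a a = mul b b.
Proof.
  split.
  - intros H. apply lcoset_involutions_iff, H, lcoset_involutions_iff. reflexivity.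
  - intros H z. rewrite !lcoset_involutions_iff, H. reflexivity.
Qed.

Lemma lcoset2_involutions_iff x y z :
  lcoset2 mul x y involutions z <-> mul z z = mul (mul x x) (mul y y).
Proof.
  split.
  - intros [k [Hk ->]]. rewrite square_mul, square_mul_involution by exact Hk.
    reflexivity.
  - intros Hz. destruct (exists_inverse x) as [x' Hx].
    destruct (exists_inverse y) as [y' Hy].
    exists (mul y' (mul x' z)). split.
    + unfold involutions. rewrite !square_mul, Hz.
      rewrite (left_inverse_property (mul x x) (mul x' x')).
      * apply square_inverse. exact Hy.
      * rewrite mul_comm. apply square_inverse. exact Hx.
    + rewrite (left_inverse_property' y y' Hy), (left_inverse_property' x x' Hx).
      reflexivity.
Qed.

Lemma mcoset_r_involutions_iff x y z :
  mcoset_r mul x involutions y z <-> mul z z = mul (mul x x) (mul y y).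
Proof.
  split.
  - intros [k [Hk ->]]. rewrite square_mul, square_mul_involution by exact Hk.
    reflexivity.
  - intros Hz. destruct (exists_inverse x) as [x' Hx].
    destruct (exists_inverse y) as [y' Hy].
    exists (mul x' (mul z y')). split.
    + unfold involutions. rewrite !square_mul, Hz.
      rewrite (right_inverse_property (mul y y) (mul y' y')).
      * apply square_inverse. exact Hx.
      * rewrite mul_comm. apply square_inverse. exact Hy.
    + rewrite (left_inverse_property' x x' Hx), right_inverse_property.
      * reflexivity.
      * rewrite mul_comm. exact Hy.
Qed.

Lemma involutions_subloop : is_subloop mul e involutions.
Proof.
  assert (Hmul : forall a b, involutions a -> involutions b -> involutions (mul a b)).
  { intros a b Ha Hb. unfold involutions. rewrite square_mul, Ha, Hb. apply mul_e_l. }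
  split; [apply mul_e_l | split; [exact Hmul | split]].
  - intros a b x Ha Hb Hab.
    replace x with (mul a b) by (rewrite <- Hab; apply left_inverse_property, Ha).
    apply Hmul; assumption.
  - intros a b y Ha Hb Hab. rewrite mul_comm in Hab.
    replace y with (mul a b) by (rewrite <- Hab; apply left_inverse_property, Ha).
    apply Hmul; assumption.
Qed.

Lemma involutions_normal_subloop : is_normal_subloop mul e involutions.
Proof.
  split; [exact involutions_subloop | split; [| split]].
  - intros x z. split; intros [k [Hk Hz]]; exists k; split; auto;
      rewrite Hz; apply mul_comm.
  - intros x y z. rewrite lcoset2_involutions_iff, lcoset_involutions_iff, square_mul.
    reflexivity.
  - intros x y z. rewrite mcoset_r_involutions_iff, <- lcoset2_involutions_iff.
    split; intros [k [Hk ->]]; exists k; split; auto; rewrite (mul_comm k); reflexivity.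
Qed.

Lemma factor_by_involutions_is_group : factor_is_group mul e involutions.
Proof.
  split; [| split; [| split]].
  - intros x x' y y'. rewrite !lcoset_involutions_eq_iff, !square_mul.
    intros -> ->. reflexivity.
  - intros x y z. apply lcoset_involutions_eq_iff. rewrite !square_mul.
    symmetry. apply square_nuclear.
  - intros x. rewrite mul_e_l, mul_e_r. split; intro z; reflexivity.
  - intros x. destruct (exists_inverse x) as [x' Hx]. exists x'.
    rewrite Hx, mul_comm, Hx. split; intro z; reflexivity.
Qed.

End CommutativeCLoop.

Theorem proposition5p2 (T : Type) (mul : T -> T -> T) (e : T)
  (HL : is_loop mul e) (Hcomm : commutative_op mul) (HC : C_identity mul) :
  let K := fun x => mul x x = e in
  is_normal_subloop mul e K /\ factor_is_group mul e K.
Proof.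
  destruct HL as [Hid [Hldiv _]].
  assert (Hl : forall x, mul e x = x) by (intro x; apply Hid).
  assert (Hr : forall x, mul x e = x) by (intro x; apply Hid).
  assert (Hdiv : forall a b, exists x, mul a x = b).
  { intros a b. destruct (Hldiv a b) as [x [Hx _]]. exists x. exact Hx. }
  split.
  - exact (@involutions_normal_subloop _ _ _ Hl Hr Hdiv Hcomm HC).
  - exact (@factor_by_involutions_is_group _ _ _ Hl Hr Hdiv Hcomm HC).
Qed.
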